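(* Let $C$ be a strictly convex subset of a topological real vector space, $f:C\to\mathbb{R}$ a strictly sub-convex function, $D\subseteq\mathbb{R}$ a subset containing $f(C)$, and $\varphi:D\to\mathbb{R}$ a non-decreasing function that is lower semi-continuous (for the subspace topology of $D$). Then $g:C\to\mathbb{R}$, $g(x)=\varphi(f(x))$, is strictly sub-convex.
   Context: Topological real vector spaces are not assumed Hausdorff. $S_r(h)=\{x: h(x)\le r\}$ for a real function $h$. For a subset $S$, $\mathrm{Aff}(S)$ is its affine hull; $\mathrm{ri}(S)$, $\mathrm{rc}(S)$ are the interior and closure of $S$ in the subspace topology of $\mathrm{Aff}(S)$. $]x,y[=\{(1-t)x+ty: t\in[0,1]\}\setminus\{x,y\}$. A set is strictly convex if for any two distinct $x,y$ in its relative closure, $]x,y[$ lies in its relative interior. A function $f$ on $C$ is strictly sub-convex if $S_r(f)$ is strictly convex for every $r\in\mathbb{R}$. *)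

From HB Require Import structures.
From mathcomp Require Import all_boot all_order all_algebra.
From mathcomp Require Import all_classical all_reals all_analysis.
Set Implicit Arguments. Unset Strict Implicit. Unset Printing Implicit Defensive.
Import Order.TTheory GRing.Theory Num.Theory.
Import numFieldNormedType.Exports.
Local Open Scope classical_set_scope.
Local Open Scope ring_scope.

Section Defs.
Variables (R : realType) (E : topologicalLmodType R).

Definition affine_set (A : set E) : Prop :=
  forall x y (t : R), A x -> A y -> A ((1 - t) *: x + t *: y).

Definition Aff (S : set E) : set E :=
  [set x | forall A : set E, affine_set A -> S `<=` A -> A x].

(* relative interior: interior of S in the subspace topology of Aff S *)
Definition ri (S : set E) : set E :=
  [set x | S x /\ exists U : set E, [/\ open U, U x & U `&` Aff S `<=` S]].

Definition rc (S : set E) : set E := closure S `&` Aff S.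

Definition oseg (x y : E) : set E :=
  [set z | exists2 t : R, 0 <= t <= 1 & z = (1 - t) *: x + t *: y]
  `\` [set x; y].

Definition strictly_convex (S : set E) : Prop :=
  forall x y, rc S x -> rc S y -> x <> y -> oseg x y `<=` ri S.

(* sublevel set S_r(f) of f : C -> R (f given as a total function on E) *)
Definition sublevel (C : set E) (f : E -> R) (r : R) : set E :=
  [set x | C x /\ f x <= r].

Definition strictly_subconvex (C : set E) (f : E -> R) : Prop :=
  forall r : R, strictly_convex (sublevel C f r).

End Defs.

Definition nondecreasing_on (R : realType) (D : set R) (phi : R -> R) : Prop :=
  forall x y, D x -> D y -> x <= y -> phi x <= phi y.

Definition lsc_on (R : realType) (D : set R) (phi : R -> R) : Prop :=
  forall x (a : R), D x -> a < phi x ->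
    exists U : set R, [/\ open U, U x & forall z, U z -> D z -> a < phi z].

From HB Require Import structures.
From mathcomp Require Import all_boot all_order all_algebra.
From mathcomp Require Import all_classical all_reals all_analysis.
Set Implicit Arguments. Unset Strict Implicit. Unset Printing Implicit Defensive.
Import Order.TTheory GRing.Theory Num.Theory.
Import numFieldNormedType.Exports.
Local Open Scope classical_set_scope.
Local Open Scope ring_scope.

(* For non-decreasing lower semi-continuous phi, the set of t in D with
   phi t <= r is empty, all of D, or D cut at its supremum s, where
   lower semi-continuity makes the cut closed: phi s <= r whenever s lies in D.
   Hence every sublevel set of phi \o f is empty, C, or a sublevel set of f,
   and each of these is strictly convex. *)

Section NondecreasingLsc.
Variables (R : realType) (D : set R) (phi : R -> R).
Hypotheses (phi_mono : nondecreasing_on D phi) (phi_lsc : lsc_on D phi).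

Lemma nondecreasing_sublevel_unbounded (r : R) :
  ~ has_ubound [set t | D t /\ phi t <= r] ->
  forall t, D t -> phi t <= r.
Proof.
move=> nub t Dt; apply: contrapT => /negP; rewrite -ltNge => rlt.
apply: nub; exists t => u [Du phiu]; rewrite leNgt; apply/negP => ltu.
by move: rlt; rewrite ltNge (le_trans _ phiu) // phi_mono // ltW.
Qed.

Lemma nondecreasing_lsc_sublevel_sup (r : R) :
  has_sup [set t | D t /\ phi t <= r] ->
  forall t, D t -> (phi t <= r <-> t <= sup [set t | D t /\ phi t <= r]).
Proof.
set Dr := [set t | _ /\ _] => supDr t Dt; split => [phit|].
  exact: sup_upper_bound.
move=> t_sup; rewrite leNgt; apply/negP => rlt.
have [U [oU Ut phiU]] := phi_lsc Dt rlt.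
have /nbhs_ballP [e e0 ballU] : nbhs t U by apply: open_nbhs_nbhs.
have [u [Du phiu] supe_lt] := sup_adherent e0 supDr.
have [tu|ut] := leP t u.
  by move: rlt; rewrite ltNge (le_trans _ phiu) // phi_mono.
suff : r < phi u by rewrite ltNge phiu.
apply: phiU Du; apply: ballU.
rewrite /ball /= ger0_norm ?subr_ge0 ?(ltW ut) // ltrBlDr -ltrBlDl.
by apply: le_lt_trans supe_lt; rewrite lerB.
Qed.

End NondecreasingLsc.

Section Sublevel.
Variables (R : realType) (E : topologicalLmodType R).

Lemma strictly_convex0 : strictly_convex (set0 : set E).
Proof. by move=> x y; rewrite /rc closure0 => -[]. Qed.

Lemma sublevel_eq0 (C : set E) (g : E -> R) (r : R) :
  (forall x, C x -> r < g x) -> sublevel C g r = set0.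
Proof.
move=> rlt; apply/seteqP; split => // x [Cx gx].
by move: (rlt x Cx); rewrite ltNge gx.
Qed.

Lemma sublevel_eqT (C : set E) (g : E -> R) (r : R) :
  (forall x, C x -> g x <= r) -> sublevel C g r = C.
Proof. by move=> gr; apply/seteqP; split => [x []//|x Cx]; split => //; apply: gr. Qed.

Lemma eq_sublevel (C : set E) (g h : E -> R) (r s : R) :
  (forall x, C x -> (g x <= r <-> h x <= s)) ->
  sublevel C g r = sublevel C h s.
Proof. by move=> ghE; apply/seteqP; split => x [Cx ?]; split => //; apply/ghE. Qed.

End Sublevel.

Theorem mainTheorem7 (R : realType) (E : topologicalLmodType R)
    (C : set E) (f : E -> R) (D : set R) (phi : R -> R) :
  strictly_convex C ->
  strictly_subconvex C f ->
  f @` C `<=` D ->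
  nondecreasing_on D phi ->
  lsc_on D phi ->
  strictly_subconvex C (fun x => phi (f x)).
Proof.
move=> convC subconvf fCD phi_mono phi_lsc r.
have Df x : C x -> D (f x) by move=> Cx; apply: fCD; exists x.
set Dr := [set t | D t /\ phi t <= r].
have [[t0 Drt0]|Dr0] := pselect (exists t, Dr t); last first.
  rewrite sublevel_eq0; first exact: strictly_convex0.
  move=> x Cx; rewrite ltNge; apply/negP => phir.
  by apply: Dr0; exists (f x); split => //; apply: Df.
have [ubDr|nubDr] := pselect (has_ubound Dr); last first.
  rewrite sublevel_eqT //.
  by move=> x Cx; apply: (nondecreasing_sublevel_unbounded phi_mono nubDr (Df x Cx)).
rewrite (@eq_sublevel _ _ _ _ f _ (sup Dr)) //.
move=> x Cx; apply: (nondecreasing_lsc_sublevel_sup phi_mono phi_lsc _ (Df x Cx)).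
by split => //; exists t0.
Qed.
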